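(* Let $\epsilon>0$, let $u\in\mathbb{R}^d$ with $\|u\|_2=1$ be an unknown utility vector, $\mathrm{util}(x)=u^Tx$, and let $D\subseteq\mathbb{R}^d$ be a finite set of tuples with $\|x\|_2\le1$, no two having the same utility. Run the streaming algorithm described in the context (with any parameters $m\ge 1$, $\gamma$) on $D$ in random order, and suppose the stream is terminated at an arbitrary moment, after which the algorithm performs its final step on the tuples that have arrived. Let $D'$ be the set of tuples that have arrived, $x^*=\arg\max_{x\in D'}\mathrm{util}(x)$, and assume $c:=\mathrm{util}(x^* )\ge 0$. Then the returned tuple $x'\in D'$ satisfies $\mathrm{util}(x^* )-\mathrm{util}(x')\le(\epsilon/c)\,\mathrm{util}(x^* )$, i.e. it is an $\epsilon/c$-regret tuple among $D'$.
   Context: Oracle: given two tuples, a comparison oracle returns the one with larger utility; the algorithm accesses $u$ only through it. Filter: a filter holds a set $S$ of tuples sorted by utility via oracle comparisons, $S=\{x_1,\dots,x_s\}$ with $\mathrm{util}(x_1)>\dots>\mathrm{util}(x_s)$. Write $S\vdash x$ if $\min_{\alpha_1,\dots,\alpha_{s-1}\ge 0}\big\|x-x_1-\sum_{j=1}^{s-1}\alpha_j(x_{j+1}-x_j)\big\|_2\le\epsilon$. The filter prunes $x$ iff $S\vdash x$ (an empty filter prunes nothing); add$(x)$ inserts $x$ into $S$; best returns $x_1$. Algorithm: start with an empty filter $F$, empty sequence $\Sigma$ of filters, empty pool $P$. For each arriving $x$: if some filter in $\Sigma$ prunes $x$, skip it; else if $|P|<m$, add $x$ to $P$; else add $x$ to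 $F$, let $P'=\{y\in P: F\text{ prunes }y\}$, and if $|P'|\ge\gamma|P|$ append $F$ to $\Sigma$, start a new empty $F$ and set $P\leftarrow P\setminus P'$. Final step: append $F$ to $\Sigma$, let $X$ be the best tuples of the nonempty filters in $\Sigma$, and return the best tuple of $X\cup P$ by pairwise comparisons. *)

From HB Require Import structures.
From mathcomp Require Import all_boot all_order all_algebra.
From mathcomp Require Import boolp reals.
Set Implicit Arguments. Unset Strict Implicit. Unset Printing Implicit Defensive.
Import Order.TTheory GRing.Theory Num.Theory.
Local Open Scope ring_scope.

Section Algo.
Variables (R : realType) (d : nat).
Notation tup := 'rV[R]_d.

Definition util (u x : tup) : R := \sum_(i < d) u 0 i * x 0 i.

Definition norm2 (x : tup) : R := Num.sqrt (\sum_(i < d) x 0 i ^+ 2).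

Definition sort_util (u : tup) (s : seq tup) : seq tup :=
  sort (fun a b => util u b <= util u a) s.

(* S |- x : min over alpha_j >= 0 of
   || x - x_1 - sum_{j=1}^{s-1} alpha_j (x_{j+1} - x_j) ||_2 <= eps.
   (The minimum is attained: distance to a closed finitely generated cone;
   so "min <= eps" is "some nonnegative alpha achieves <= eps".) *)
Definition entails (eps : R) (S : seq tup) (x : tup) : Prop :=
  match S with
  | [::] => False
  | x1 :: _ =>
      exists alpha : nat -> R, (forall j, 0 <= alpha j) /\
        norm2 (x - x1 - \sum_(j < (size S).-1)
                          alpha j *: (nth 0 S j.+1 - nth 0 S j)) <= eps
  end.

Definition prunes (eps : R) (S : seq tup) (x : tup) : bool := `[< entails eps S x >].

Definition fadd (u : tup) (S : seq tup) (x : tup) : seq tup := sort_util u (x :: S).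

Record state := State { stF : seq tup; stSigma : seq (seq tup); stP : seq tup }.

Definition init_state : state := State [::] [::] [::].

Definition step (eps : R) (u : tup) (m : nat) (gamma : R) (st : state) (x : tup)
  : state :=
  let: State F Sigma P := st in
  if has (fun G => prunes eps G x) Sigma then st
  else if (size P < m)%N then State F Sigma (rcons P x)
  else
    let F' := fadd u F x in
    let P' := filter (prunes eps F') P in
    if gamma * (size P)%:R <= (size P')%:R
    then State [::] (rcons Sigma F') (filter (predC (prunes eps F')) P)
    else State F' Sigma P.

Definition best_of (u : tup) (s : seq tup) : tup :=
  match s with
  | [::] => 0
  | c :: cs => foldl (fun a b => if util u a < util u b then b else a) c cs
  end.

Definition finish (u : tup) (st : state) : tup :=
  let: State F Sigma P := st in
  let Sigma' := rcons Sigma F in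
  let X := [seq head 0 G | G <- Sigma' & G != [::]] in
  best_of u (X ++ P).

Definition run (eps : R) (u : tup) (m : nat) (gamma : R) (s : seq tup) : tup :=
  finish u (foldl (step eps u m gamma) init_state s).

End Algo.

(* The bound is deterministic: it holds for every arrival order and stopping
   point.
   Invariant: every arrived tuple is still in the pool or lies within eps, in
   utility, of a tuple held by some filter. A tuple x pruned by a filter
   x_1, ..., x_s is within distance eps of x_1 + sum_j alpha_j (x_(j+1) - x_j)
   with alpha_j >= 0; each x_(j+1) - x_j has nonpositive utility, and by
   Cauchy-Schwarz with |u| = 1 a vector of norm at most eps has utility at most
   eps, so util x <= util x_1 + eps. The final step compares the pool with the
   best tuple of every filter, hence returns an arrived tuple within eps of all
   arrived tuples, x* included. *)

From HB Require Import structures.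
From mathcomp Require Import all_boot all_order all_algebra.
From mathcomp Require Import boolp reals.
From mathcomp Require Import ring lra.
Import Order.TTheory GRing.Theory Num.Theory.
Local Open Scope ring_scope.
Set Implicit Arguments. Unset Strict Implicit.

Lemma head_mem (T : eqType) (x0 : T) s : s != [::] -> head x0 s \in s.
Proof. by case: s => // x s _; rewrite mem_head. Qed.

Section Utility.
Variables (R : realType) (d : nat) (u : 'rV[R]_d).
Local Notation tup := 'rV[R]_d.

Fact util_is_linear : linear_for *%R (util u).
Proof.
move=> a x y; rewrite /util mulr_sumr -big_split.
by apply: eq_bigr => i _; rewrite !mxE mulrDr mulrCA.
Qed.

HB.instance Definition _ :=
  GRing.isLinear.Build R tup R *%R (util u) util_is_linear.

Lemma sqr_norm2 (x : tup) : norm2 x ^+ 2 = \sum_(i < d) x 0 i ^+ 2.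
Proof. by rewrite sqr_sqrtr // sumr_ge0 // => i _; rewrite sqr_ge0. Qed.

Lemma util_le_norm2 (r : tup) : norm2 u = 1 -> util u r <= norm2 r.
Proof.
move=> u1.
(* 0 <= |a u - r|^2 = |r|^2 - a^2 for a = util u r *)
have expand (a : R) : \sum_(i < d) (a * u 0 i - r 0 i) ^+ 2
    = a ^+ 2 * \sum_(i < d) u 0 i ^+ 2 - 2 * a * util u r
      + \sum_(i < d) r 0 i ^+ 2.
  rewrite /util !mulr_sumr -sumrB -big_split; apply: eq_bigr => i _ /=; ring.
have : 0 <= \sum_(i < d) (util u r * u 0 i - r 0 i) ^+ 2.
  by rewrite sumr_ge0 // => i _; rewrite sqr_ge0.
rewrite expand -!sqr_norm2 u1.
have : 0 <= norm2 r by rewrite sqrtr_ge0.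
nra.
Qed.

Definition util_ge : rel tup := fun a b => util u b <= util u a.

Lemma util_ge_trans : transitive util_ge.
Proof. by move=> y x z xy yz; apply: le_trans xy. Qed.

Lemma util_ge_total : total util_ge.
Proof. by move=> a b; apply: le_total. Qed.

Lemma sorted_util_le_head (G : seq tup) x :
  sorted util_ge G -> x \in G -> util u x <= util u (head 0 G).
Proof.
case: G => [//|g G] /= /(order_path_min util_ge_trans) /allP gmax.
by rewrite inE => /predU1P [-> // | /gmax].
Qed.

Lemma entails_util_le eps (G : seq tup) x : norm2 u = 1 ->
  sorted util_ge G -> entails eps G x -> util u x <= util u (head 0 G) + eps.
Proof.
case: G => [//|g G] u1 /= Gsorted [alpha [alpha_ge0 close]].
have := le_trans (util_le_norm2 _ u1) close.
rewrite !linearB linear_sum /=.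
suff : \sum_(j < size G)
         util u (alpha j *: ((g :: G)`_j.+1 - (g :: G)`_j)) <= 0 by lra.
apply: sumr_le0 => j _; rewrite linearZ linearB /= mulr_ge0_le0 // subr_le0.
exact: (pathP 0 Gsorted).
Qed.

Lemma best_of_max (s : seq tup) : s != [::] ->
  best_of u s \in s /\ {in s, forall y, util u y <= util u (best_of u s)}.
Proof.
case: s => [//|a s] _ /=; elim: s a => [|b s IH] a /=.
  by split=> [|y]; rewrite ?inE // => /eqP ->.
set c := if util u a < util u b then b else a.
have [c_in c_max] := IH c.
have [ac bc] : util u a <= util u c /\ util u b <= util u c.
  by rewrite /c; case: ltP => [/ltW|]; split.
split.
  move: c_in; rewrite !inE /c.
  by case: ifP => _ /predU1P [->|->]; rewrite ?eqxx ?orbT.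
move=> y; rewrite !inE => /predU1P [->|/predU1P [->|ys]].
- by apply: le_trans ac (c_max _ (mem_head _ _)).
- by apply: le_trans bc (c_max _ (mem_head _ _)).
- by apply: c_max; rewrite inE ys orbT.
Qed.

End Utility.

Section Run.
Variables (R : realType) (d : nat) (eps : R) (u : 'rV[R]_d).
Variables (m : nat) (gamma : R).
Local Notation tup := 'rV[R]_d.
Local Notation step := (step eps u m gamma).

Definition filters (st : state R d) : seq (seq tup) :=
  rcons (stSigma st) (stF st).

Definition filtered (st : state R d) : seq tup := flatten (filters st).

Definition stored (st : state R d) : seq tup := stP st ++ filtered st.

Definition dominated (S : seq tup) (x : tup) : Prop :=
  exists2 y, y \in S & util u x <= util u y + eps.

Lemma mem_fadd (F : seq tup) x : fadd u F x =i x :: F.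
Proof. exact: mem_sort. Qed.

Lemma fadd_sorted (F : seq tup) x : sorted (util_ge u) (fadd u F x).
Proof. exact/sort_sorted/util_ge_total. Qed.

Lemma dominated_sub (S S' : seq tup) x :
  {subset S <= S'} -> dominated S x -> dominated S' x.
Proof. by move=> SS' [y /SS' yS' xy]; exists y. Qed.

Lemma dominated_mem (S : seq tup) x : 0 <= eps -> x \in S -> dominated S x.
Proof. by move=> eps0 xS; exists x; rewrite ?lerDl. Qed.

Lemma entails_dominated (G : seq tup) x : norm2 u = 1 ->
  sorted (util_ge u) G -> entails eps G x -> dominated G x.
Proof.
move=> u1 Gsorted Gx; exists (head 0 G); last exact: entails_util_le.
by apply: head_mem; case: G Gx {Gsorted}.
Qed.

Lemma step_stored_sub st x : {subset stored (step st x) <= x :: stored st}.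
Proof.
case: st => F Sigma P y; rewrite /step /stored /filtered /filters /=.
case: ifP => _; first by rewrite inE => ->; rewrite orbT.
case: ifP => _; last case: ifP => _;
  rewrite !(mem_cat, mem_rcons, flatten_rcons, mem_fadd, mem_filter, inE) /=;
  by move: (y == x) (y \in P) (y \in F) (y \in flatten Sigma) => [] [] [] [];
    rewrite ?andbF.
Qed.

Lemma step_filters_sorted st x :
  {in filters st, forall G, sorted (util_ge u) G} ->
  {in filters (step st x), forall G, sorted (util_ge u) G}.
Proof.
case: st => F Sigma P sorted_st; rewrite /step /=.
case: ifP => _ //; case: ifP => _ //.
have F'sorted := fadd_sorted F x.
case: ifP => _ G; rewrite /filters /= !(mem_rcons, inE) => /predU1P [->//|].
  case/predU1P => [->//|GSigma].
  by apply: sorted_st; rewrite mem_rcons inE GSigma orbT.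
by move=> GSigma; apply: sorted_st; rewrite mem_rcons inE GSigma orbT.
Qed.

Lemma step_filtered_sub st x :
  {subset filtered st <= filtered (step st x)}.
Proof.
case: st => F Sigma P y; rewrite /step /filtered /filters /=.
case: ifP => _ //; case: ifP => _ //; case: ifP => _;
  rewrite !(mem_cat, flatten_rcons, mem_fadd, inE) /=;
  by move: (y == x) (y \in F) (y \in flatten Sigma) => [] [] [].
Qed.

Lemma step_pool_covered st x : norm2 u = 1 -> 0 <= eps ->
  {in filters st, forall G, sorted (util_ge u) G} ->
  {in x :: stP st, forall y,
    y \in stP (step st x) \/ dominated (filtered (step st x)) y}.
Proof.
case: st => F Sigma P u1 eps0 sorted_st y; rewrite /step /filtered /filters /=.
have F'sorted := fadd_sorted F x.
have x_F' : x \in fadd u F x by rewrite mem_fadd mem_head.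
case: ifP => [/hasP [G GSigma /asboolP Gx] | _].
  rewrite inE => /predU1P [-> | yP]; [right | by left].
  apply: dominated_sub (entails_dominated u1 _ Gx).
    move=> z zG; rewrite flatten_rcons mem_cat; apply/orP; left.
    by apply/flattenP; exists G.
  by apply: sorted_st; rewrite mem_rcons inE GSigma orbT.
case: ifP => _.
  by rewrite inE mem_rcons inE => yP; left.
case: ifP => _; rewrite inE => /predU1P [-> | yP].
- by right; apply: dominated_mem; rewrite // !flatten_rcons !mem_cat x_F' orbT.
- case F'y: (prunes eps (fadd u F x) y).
    2: by left; rewrite mem_filter /= F'y.
  right; apply: dominated_sub (entails_dominated u1 F'sorted (asboolW F'y)).
  by move=> z zF'; rewrite !flatten_rcons !mem_cat zF' orbT.
- by right; apply: dominated_mem; rewrite // flatten_rcons mem_cat x_F' orbT.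
- by left.
Qed.

Record invariant (st : state R d) (s : seq tup) : Prop := Invariant {
  stored_arrived : {subset stored st <= s};
  filters_sorted : {in filters st, forall G, sorted (util_ge u) G};
  arrived_covered : {in s, forall x,
    x \in stP st \/ dominated (filtered st) x}
}.

Lemma invariant_step st s x : norm2 u = 1 -> 0 <= eps ->
  invariant st s -> invariant (step st x) (rcons s x).
Proof.
move=> u1 eps0 [st_s st_sorted s_covered].
have pool_covered := step_pool_covered (x := x) u1 eps0 st_sorted.
split.
- move=> y /step_stored_sub; rewrite mem_rcons !inE => /predU1P [->|/st_s ->];
    by rewrite ?eqxx ?orbT.
- exact: step_filters_sorted.
- move=> y; rewrite mem_rcons inE => /predU1P [->|/s_covered [yP|y_dom]].
  + by apply: pool_covered; rewrite mem_head.
  + by apply: pool_covered; rewrite inE yP orbT.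
  + by right; apply: dominated_sub y_dom; apply: step_filtered_sub.
Qed.

Lemma invariant_run s : norm2 u = 1 -> 0 <= eps ->
  invariant (foldl step (init_state R d) s) s.
Proof.
move=> u1 eps0; elim/last_ind: s => [|s x IH].
  by split=> // G; rewrite inE => /eqP ->.
by rewrite foldl_rcons; apply: invariant_step.
Qed.

Lemma finish_dominates st s x :
  norm2 u = 1 -> 0 <= eps -> invariant st s -> x \in s ->
  finish u st \in s /\ util u x <= util u (finish u st) + eps.
Proof.
case: st => F Sigma P u1 eps0 [st_s st_sorted s_covered] xs; rewrite /finish.
set X := [seq head 0 G | G <- rcons Sigma F & G != [::]].
have XP_stored : {subset X ++ P <= stored (State F Sigma P)}.
  move=> y; rewrite /stored /filtered /filters /= !mem_cat.
  case/orP => [/mapP [G] | ->//].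
  rewrite mem_filter => /andP [G_nonnil GF] ->; apply/orP; right.
  by apply/flattenP; exists G => //; apply: head_mem.
have [y yXP xy] : exists2 y, y \in X ++ P & util u x <= util u y + eps.
  have [/= xP | [z /flattenP [G GF zG] xz]] := s_covered x xs.
    by exists x; rewrite ?mem_cat ?xP ?orbT ?lerDl.
  exists (head 0 G).
    by rewrite mem_cat map_f ?mem_filter ?GF //; case: G zG {GF}.
  by apply: le_trans xz _; rewrite lerD2r sorted_util_le_head // st_sorted.
have XP_nonempty : X ++ P != [::] by case: (X ++ P) yXP.
have [best_in best_max] := best_of_max u XP_nonempty.
split; first exact/st_s/XP_stored.
by apply: le_trans xy _; rewrite lerD2r best_max.
Qed.

Lemma run_dominates s x : norm2 u = 1 -> 0 <= eps -> x \in s ->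
  run eps u m gamma s \in s /\ util u x <= util u (run eps u m gamma s) + eps.
Proof.
by move=> u1 eps0; apply: finish_dominates (invariant_run _ u1 eps0).
Qed.

End Run.

Theorem theorem4p3 (R : realType) (d : nat) (eps : R) (u : 'rV[R]_d)
    (D : seq 'rV[R]_d) (m : nat) (gamma : R) (order : seq 'rV[R]_d) (k : nat)
    (xstar : 'rV[R]_d) :
  0 < eps ->
  norm2 u = 1 ->
  uniq D ->
  (forall x, x \in D -> norm2 x <= 1) ->
  {in D &, injective (util u)} ->
  (1 <= m)%N ->
  perm_eq order D ->
  let D' := take k order in
  xstar \in D' ->
  (forall x, x \in D' -> util u x <= util u xstar) ->
  0 <= util u xstar ->
  let c := util u xstar in
  let x' := run eps u m gamma D' in
  [/\ x' \in D',
      c - util u x' <= eps &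
      (0 < c -> c - util u x' <= (eps / c) * c)].
Proof.
move=> eps_gt0 u1 _ _ _ _ _ D' xstar_in _ _ c x'.
have [x'_in xstar_le] := run_dominates m gamma u1 (ltW eps_gt0) xstar_in.
have regret : c - util u x' <= eps by rewrite lerBlDl.
by split=> // c_gt0; rewrite divfK ?gt_eqF.
Qed.
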